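(* Let $(M,\Sigma)$ be a measurable space, let $r\ge 1$, and let $\psi_1,\dots,\psi_r\colon\Sigma\to\mathbb{R}$ be non-atomic countably additive charges. Then there exists (and can be obtained by an explicit construction) a strong solution to the fair division problem for $\psi_1,\dots,\psi_r$, i.e. a partition $M=F_1\sqcup\dots\sqcup F_r$ into measurable sets with $\psi_i(F_i)\ge\psi_i(F_j)$ for all $i,j\in\{1,\dots,r\}$.
   Context: A charge is a countably additive real-valued (hence finite) signed measure $\psi\colon\Sigma\to\mathbb{R}$. By the Hahn–Jordan decomposition there is a measurable partition $M=A^+\sqcup A^-$ with $\psi(a)\ge0$ for measurable $a\subseteq A^+$ and $\psi(b)\le 0$ for measurable $b\subseteq A^-$, so $\psi=\mu^+-\mu^-$ where $\mu^\pm$ are the (nonnegative) measures $\mu^+(E)=\psi(E\cap A^+)$, $\mu^-(E)=-\psi(E\cap A^-)$. The charge $\psi$ is called non-atomic if both $\mu^+$ and $\mu^-$ are non-atomic measures. Partition elements are allowed to be empty. *)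

From HB Require Import structures.
From mathcomp Require Import all_boot all_order all_algebra.
From mathcomp Require Import all_classical all_reals all_analysis.
Set Implicit Arguments. Unset Strict Implicit. Unset Printing Implicit Defensive.
Import Order.TTheory GRing.Theory Num.Theory.
Local Open Scope classical_set_scope.
Local Open Scope ring_scope.
Local Open Scope ereal_scope.

Definition is_atom d (T : measurableType d) (R : realType)
  (mu : set T -> \bar R) (A : set T) : Prop :=
  [/\ measurable A, 0 < mu A &
      forall B, measurable B -> B `<=` A -> mu B = 0 \/ mu B = mu A].

Definition nonatomic d (T : measurableType d) (R : realType)
  (mu : set T -> \bar R) : Prop := forall A, ~ is_atom mu A.

(* A charge is non-atomic if, for a Hahn decomposition M = A+ ⊔ A-,
   both parts of the Jordan decomposition mu+ (E) = psi (E ∩ A+)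
   and mu- (E) = - psi (E ∩ A-) are non-atomic measures. *)
Definition charge_nonatomic d (T : measurableType d) (R : realType)
  (psi : {charge set T -> \bar R}) : Prop :=
  exists P N, [/\ hahn_decomposition psi P N,
    nonatomic (fun E => psi (E `&` P)) &
    nonatomic (fun E => - psi (E `&` N))].

From HB Require Import structures.
From mathcomp Require Import all_boot all_order all_algebra.
From mathcomp Require Import all_classical all_reals all_analysis.
From mathcomp Require Import ring lra.
Import Order.TTheory GRing.Theory Num.Theory.
Set Implicit Arguments. Unset Strict Implicit. Unset Printing Implicit Defensive.
Local Open Scope classical_set_scope.
Local Open Scope ring_scope.

(* Each charge is the difference of the two parts of its Jordan decomposition,
   which gives finitely many non-atomic finite measures; it suffices to split
   M into r pieces on which each of these measures takes a (1/r)-th of its total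
   mass, since then every charge takes the same value on every piece.
   The split comes from a Lyapunov-type property: every measurable A has a
   subset E with mu E = t * mu A simultaneously for all the measures.  For
   t = 1/2 this is proved by induction on the number of measures.  Given a
   simultaneous halving operator h for the old measures and a new measure nu,
   keep two sets X, Y that are halves of A for the old measures, with
   nu X <= nu A / 2 <= nu Y.  Replacing one of them by
   (X `&` Y) `|` h (X `\` Y) `|` h (Y `\` X) keeps this invariant and halves the
   old masses of X `\` Y; in the limit X `&` Y and X `|` Y squeeze the old
   masses to half of A, and Sierpinski's intermediate value theorem for the
   single non-atomic measure nu fills the gap between them.  General t follows
   by binary expansion, and the r pieces by cutting off a (1/r)-th at a time. *)

Section fine_measure.
Context d (T : measurableType d) (R : realType).
Variable mu : {finite_measure set T -> \bar R}.
Implicit Types A B : set T.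

Lemma fine_measure_ge0 A : 0 <= fine (mu A).
Proof. exact/fine_ge0/measure_ge0. Qed.

Lemma fine_measureU A B : measurable A -> measurable B -> A `&` B = set0 ->
  fine (mu (A `|` B)) = fine (mu A) + fine (mu B).
Proof. by move=> mA mB AB; rewrite measureU// fineD// fin_num_measure. Qed.

Lemma fine_measureDI A B : measurable A -> measurable B ->
  fine (mu A) = fine (mu (A `\` B)) + fine (mu (A `&` B)).
Proof.
move=> mA mB; rewrite (measureDI mu mA mB) fineD// fin_num_measure//.
- exact: measurableD.
- exact: measurableI.
Qed.

Lemma fine_measureD A B : measurable A -> measurable B -> B `<=` A ->
  fine (mu (A `\` B)) = fine (mu A) - fine (mu B).
Proof. by move=> mA mB BA; rewrite (fine_measureDI mA mB) setIidr//; lra. Qed.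

Lemma fine_measureUI A B : measurable A -> measurable B ->
  fine (mu (A `|` B)) = fine (mu A) + fine (mu B) - fine (mu (A `&` B)).
Proof.
move=> mA mB; have -> : A `|` B = A `|` (B `\` A) by rewrite setUDr setDv setD0.
rewrite fine_measureU ?setDIK //; last exact: measurableD.
by rewrite (fine_measureDI mB mA) setIC; lra.
Qed.

Lemma le_fine_measure A B : measurable A -> measurable B -> A `<=` B ->
  fine (mu A) <= fine (mu B).
Proof.
by move=> mA mB AB; apply: fine_le; rewrite ?fin_num_measure// le_measure ?inE.
Qed.

Lemma fine_measure_bigcup_le (F : (set T)^nat) c :
  (forall n, measurable (F n)) -> nondecreasing_seq F ->
  (forall n, fine (mu (F n)) <= c) -> fine (mu (\bigcup_n F n)) <= c.
Proof.
move=> mF ndF Fc; have mU := bigcupT_measurable F mF.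
rewrite -lee_fin fineK ?fin_num_measure//.
rewrite -(cvg_lim _ (nondecreasing_cvg_mu mF mU ndF))//.
apply: lime_le; first exact: cvgP (nondecreasing_cvg_mu mF mU ndF).
apply: nearW => n /=.
by rewrite -(fineK (fin_num_measure _ _ (mF n))) lee_fin; exact: Fc.
Qed.

Lemma fine_measure_bigcap_ge (F : (set T)^nat) c :
  (forall n, measurable (F n)) -> nonincreasing_seq F ->
  (forall n, c <= fine (mu (F n))) -> c <= fine (mu (\bigcap_n F n)).
Proof.
move=> mF niF cF; have mI := bigcapT_measurable mF.
have F0oo : (mu (F 0%N) < +oo)%E by rewrite ltey_eq fin_num_measure.
have cvgF := nonincreasing_cvg_mu F0oo mF mI niF.
rewrite -lee_fin fineK ?fin_num_measure// -(cvg_lim _ cvgF)//.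
apply: lime_ge; first exact: cvgP cvgF.
apply: nearW => n /=.
by rewrite -(fineK (fin_num_measure _ _ (mF n))) lee_fin; exact: cF.
Qed.

Lemma exists_near_max_subset D y : measurable D -> 0 <= y -> exists B,
  [/\ measurable B, B `<=` D, fine (mu B) <= y &
   forall C, measurable C -> C `<=` D -> fine (mu C) <= y ->
     fine (mu C) <= 2 * fine (mu B)].
Proof.
move=> mD y0.
pose S := [set fine (mu C) |
  C in [set C | [/\ measurable C, C `<=` D & fine (mu C) <= y]]].
have S0 : S 0 by exists set0; rewrite /= measure0 //; split.
have supS : has_sup S by split; [exists 0 | exists y => _ [C [_ _ Cy] <-]].
have CS C : measurable C -> C `<=` D -> fine (mu C) <= y -> fine (mu C) <= sup S.
  by move=> mC CD Cy; apply: sup_upper_bound => //; exists C.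
have [S_le0|S_gt0] := lerP (sup S) 0.
  exists set0; rewrite measure0 mulr0; split => // C mC CD Cy.
  exact: le_trans (CS C mC CD Cy) S_le0.
have [_ [B [mB BD By] <-] supB] := sup_adherent (divr_gt0 S_gt0 (ltr0n R 2)) supS.
exists B; split => // C mC CD Cy; have := CS C mC CD Cy; lra.
Qed.

End fine_measure.

Lemma natmul_bounded_le0 (R : archiRealFieldType) (x y : R) :
  (forall k, x *+ k <= y) -> x <= 0.
Proof.
move=> xy; rewrite leNgt; apply/negP => x0.
have y0 : 0 <= y by have := xy 0%N; rewrite mulr0n.
have := archi_boundP (divr_ge0 y0 (ltW x0)).
by rewrite ltr_pdivrMr // mulr_natl ltNge xy.
Qed.

Lemma pow2_bounded_le0 (R : archiRealFieldType) (x y : R) :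
  (forall k, x * 2 ^+ k <= y) -> x <= 0.
Proof.
move=> xy; rewrite leNgt; apply/negP => x_gt0.
suff : x <= 0 by rewrite leNgt x_gt0.
apply: (natmul_bounded_le0 (y := y)) => k; apply: le_trans _ (xy k).
rewrite -[x *+ k]mulr_natr ler_pM2l // -natrX ler_nat; exact/ltnW/ltn_expl.
Qed.

Section nonatomic_measure.
Context d (T : measurableType d) (R : realType).
Variable mu : {finite_measure set T -> \bar R}.
Hypothesis mu_na : nonatomic mu.
Implicit Types A B : set T.

Lemma nonatomic_subset_le_half A : measurable A -> 0 < fine (mu A) ->
  exists B, [/\ measurable B, B `<=` A, 0 < fine (mu B) &
    fine (mu B) <= fine (mu A) / 2].
Proof.
move=> mA A0.
have [B [mB BA B0 BltA]] : exists B, [/\ measurable B, B `<=` A, 0 < fine (mu B)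
    & fine (mu B) < fine (mu A)].
  apply: contrapT => noB; apply: (@mu_na A); split => //.
    by rewrite -(fineK (fin_num_measure _ _ mA)) lte_fin.
  move=> B mB BA; suff : fine (mu B) = 0 \/ fine (mu B) = fine (mu A).
    by case=> h; [left|right];
      rewrite -(fineK (fin_num_measure _ _ mB)) h ?fineK ?fin_num_measure.
  have := le_fine_measure mu mB mA BA; rewrite le_eqVlt => /orP[/eqP|]; first by right.
  have := fine_measure_ge0 mu B; rewrite le_eqVlt => /orP[/eqP <-|B0 BltA].
    by left.
  by exfalso; apply: noB; exists B.
have [BleA|AltB] := lerP (fine (mu B)) (fine (mu A) / 2); first by exists B.
exists (A `\` B); split; [exact: measurableD | exact: subDsetl | |];
  rewrite fine_measureD //; lra.
Qed.

Lemma nonatomic_small_subset A e : measurable A -> 0 < fine (mu A) -> 0 < e ->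
  exists B, [/\ measurable B, B `<=` A, 0 < fine (mu B) & fine (mu B) <= e].
Proof.
move=> mA A0 e0.
have halves k : exists B, [/\ measurable B, B `<=` A, 0 < fine (mu B)
    & fine (mu B) * 2 ^+ k <= fine (mu A)].
  elim: k => [|k [B [mB BA B0 hB]]]; first by exists A; rewrite expr0 mulr1; split.
  have [C [mC CB C0 hC]] := nonatomic_subset_le_half mB B0.
  exists C; split => //; first exact: subset_trans BA.
  apply: le_trans hB; rewrite exprS mulrA ler_pM2r ?exprn_gt0 //; lra.
apply: contrapT => noB; suff : e <= 0 by lra.
apply: (pow2_bounded_le0 (y := fine (mu A))) => k.
have [B [mB BA B0 hB]] := halves k; apply: le_trans hB.
rewrite ler_pM2r ?exprn_gt0 // leNgt; apply/negP => Be.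
by apply: noB; exists B; split => //; exact: ltW.
Qed.

Lemma nonatomic_subset_fine_measure_eq A x : measurable A -> 0 <= x <= fine (mu A) ->
  exists E, [/\ measurable E, E `<=` A & fine (mu E) = x].
Proof.
move=> mA /andP[x0 xA].
have near_max E : exists B, measurable E -> fine (mu E) <= x ->
    [/\ measurable B, B `<=` A `\` E, fine (mu B) <= x - fine (mu E) &
     forall C, measurable C -> C `<=` A `\` E -> fine (mu C) <= x - fine (mu E) ->
       fine (mu C) <= 2 * fine (mu B)].
  have [[mE Ex]|nE] := pselect (measurable E /\ fine (mu E) <= x).
    have x_E : 0 <= x - fine (mu E) by lra.
    by have [B ?] := exists_near_max_subset mu (measurableD mA mE) x_E; exists B.
  by exists set0 => mE Ex; exfalso; apply: nE.
have [g gP] := choice near_max.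
(* Greedy exhaustion: each step adds at least half of what any admissible set
   could add, so if the union fell short of x, a small set of positive mass left
   outside it would stay admissible forever and the increments would not be
   summable. *)
pose E := fix E k := if k is k.+1 then E k `|` g (E k) else set0.
have EP k : [/\ measurable (E k), E k `<=` A & fine (mu (E k)) <= x].
  elim: k => [|k [mE EA Ex]] /=; first by rewrite measure0; split.
  have [mg gAE gx _] := gP _ mE Ex.
  have Eg0 : E k `&` g (E k) = set0.
    by rewrite setIC; apply/disjoints_subset => z /gAE [].
  split; [exact: measurableU | by move=> z [/EA|/gAE []] | ].
  rewrite fine_measureU //; lra.
have mE k : measurable (E k) by case: (EP k).
pose U := \bigcup_k E k.
have mU : measurable U := bigcupT_measurable E mE.
have EU k : E k `<=` U by exact: bigcup_sup.
have Ux : fine (mu U) <= x.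
  apply: fine_measure_bigcup_le => // [|k]; last by case: (EP k).
  by apply/nondecreasing_seqP => k; apply/subsetPset => z Ez; left.
have UA : U `<=` A by move=> z [k _]; case: (EP k) => _ + _; apply.
exists U; split => //.
apply/eqP; rewrite eq_le Ux /= leNgt; apply/negP => xU.
have AU0 : 0 < fine (mu (A `\` U)) by rewrite fine_measureD //; lra.
have xU0 : 0 < x - fine (mu U) by lra.
have [C [mC CAU C0 Cx]] := nonatomic_small_subset (measurableD mA mU) AU0 xU0.
suff : fine (mu C) / 2 <= 0 by lra.
apply: (natmul_bounded_le0 (y := x)) => k.
apply: le_trans (_ : fine (mu (E k)) <= x); last by case: (EP k).
elim: k => [|k IH] /=; first by rewrite mulr0n measure0.
have [_ _ Ex] := EP k; have [mg gAE _ gmax] := gP _ (mE k) Ex.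
rewrite fine_measureU //; last by rewrite setIC; apply/disjoints_subset => z /gAE [].
have CAE : C `<=` A `\` E k by move=> z /CAU [Az Uz]; split => // /(EU k).
have EkU := le_fine_measure mu (mE k) mU (EU k).
have gC : fine (mu C) <= 2 * fine (mu (g (E k))) by apply: gmax => //; lra.
rewrite mulrSr; lra.
Qed.

End nonatomic_measure.

Section simultaneous_halving.
Context d (T : measurableType d) (R : realType) (I : eqType).
Variable mu : I -> {finite_measure set T -> \bar R}.
Implicit Types (s : seq I) (A X Y : set T).

Definition halving s (h : set T -> set T) := forall X, measurable X ->
  [/\ measurable (h X), h X `<=` X &
      forall i, i \in s -> fine (mu i (h X)) = fine (mu i X) / 2].

Section bisection.
Variables (s : seq I) (h : set T -> set T) (j : I) (A : set T).
Hypotheses (hs : halving s h) (mA : measurable A).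

Let half := fine (mu j A) / 2.

Definition bisect_mid X Y := X `&` Y `|` h (X `\` Y) `|` h (Y `\` X).

Definition bisect_step (XY : set T * set T) :=
  let Z := bisect_mid XY.1 XY.2 in
  if half <= fine (mu j Z) then (XY.1, Z) else (Z, XY.2).

Definition bisect k := iter k bisect_step
  (if fine (mu j (h A)) <= half then (h A, A `\` h A) else (A `\` h A, h A)).

Definition bisect_inv k (XY : set T * set T) :=
  [/\ measurable XY.1, measurable XY.2, XY.1 `|` XY.2 `<=` A,
      fine (mu j XY.1) <= half <= fine (mu j XY.2) &
      forall i, i \in s -> [/\ fine (mu i XY.1) = fine (mu i A) / 2,
        fine (mu i XY.2) = fine (mu i A) / 2 &
        (fine (mu i XY.1) - fine (mu i (XY.1 `&` XY.2))) * 2 ^+ k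
          <= fine (mu i A)]].

Lemma bisect_mid_sub X Y : measurable X -> measurable Y ->
  [/\ measurable (bisect_mid X Y), X `&` Y `<=` bisect_mid X Y
    & bisect_mid X Y `<=` X `|` Y].
Proof.
move=> mX mY; have [mhX hX _] := hs (measurableD mX mY).
have [mhY hY _] := hs (measurableD mY mX).
split; first by apply: measurableU; [apply: measurableU; [exact: measurableI|]|].
  by move=> z XYz; left; left.
by move=> z [[[]|/hX[]]|/hY[]]; [left|left|right].
Qed.

Lemma bisect_mid_measure i X Y : i \in s -> measurable X -> measurable Y ->
  fine (mu i X) = fine (mu i Y) ->
  [/\ fine (mu i (bisect_mid X Y)) = fine (mu i X),
      (fine (mu i X) - fine (mu i (X `&` bisect_mid X Y))) * 2
        <= fine (mu i X) - fine (mu i (X `&` Y)) &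
      (fine (mu i X) - fine (mu i (bisect_mid X Y `&` Y))) * 2
        <= fine (mu i X) - fine (mu i (X `&` Y))].
Proof.
move=> si mX mY XY; have mXY := measurableI _ _ mX mY.
have [mhX hX hXi] := hs (measurableD mX mY).
have [mhY hY hYi] := hs (measurableD mY mX).
have X_hY : X `&` h (Y `\` X) = set0.
  by rewrite setIC; apply/disjoints_subset => z /hY[].
have XY_hX : X `&` Y `&` h (X `\` Y) = set0.
  by rewrite setIC; apply/disjoints_subset => z /hX[_ nYz] [].
have mXYhX : measurable (X `&` Y `|` h (X `\` Y)) by exact: measurableU.
have mXYhY : measurable (X `&` Y `|` h (Y `\` X)) by exact: measurableU.
have eX := fine_measureDI (mu i) mX mY; have eY := fine_measureDI (mu i) mY mX.
rewrite setIC in eY.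
have [mmid _ _] := bisect_mid_sub mX mY.
have eXYhX : fine (mu i (X `&` Y `|` h (X `\` Y))) =
    fine (mu i (X `&` Y)) + fine (mu i (X `\` Y)) / 2.
  by rewrite fine_measureU // hXi.
have eXYhY : fine (mu i (X `&` Y `|` h (Y `\` X))) =
    fine (mu i (X `&` Y)) + fine (mu i (Y `\` X)) / 2.
  rewrite fine_measureU // ?hYi //.
  by apply: subsetI_eq0 X_hY => // z [].
split.
- rewrite fine_measureU // ?hYi //; last first.
    by apply: subsetI_eq0 X_hY => // z [[]|/hX[]].
  rewrite eXYhX; lra.
- have : fine (mu i (X `&` Y `|` h (X `\` Y))) <= fine (mu i (X `&` bisect_mid X Y)).
    apply: le_fine_measure mXYhX (measurableI _ _ mX mmid) _.
    move=> z [XYz|hXz]; first by split; [case: XYz | left; left].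
    by have [Xz _] := hX z hXz; split => //; left; right.
  rewrite eXYhX; lra.
- have : fine (mu i (X `&` Y `|` h (Y `\` X))) <= fine (mu i (bisect_mid X Y `&` Y)).
    apply: le_fine_measure mXYhY (measurableI _ _ mmid mY) _.
    move=> z [XYz|hYz]; first by split; [left; left | case: XYz].
    by have [Yz _] := hY z hYz; split => //; right.
  rewrite eXYhY; lra.
Qed.

Lemma bisectS k : bisect k.+1 = bisect_step (bisect k).
Proof. exact: iterS. Qed.

Lemma bisect_inv0 : bisect_inv 0 (bisect 0).
Proof.
have [mhA hA hAi] := hs mA; have mAh := measurableD mA mhA.
have Ah i : fine (mu i (A `\` h A)) = fine (mu i A) - fine (mu i (h A)).
  exact: fine_measureD.
have AhA : (A `\` h A) `&` h A = set0 by rewrite setDKI.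
have hA0 i : 0 <= fine (mu i A) / 2 by have := fine_measure_ge0 (mu i) A; lra.
rewrite /bisect_inv /bisect /half /=; case: ifPn => hAj; split => //=.
- by move=> z [/hA|[]].
- by apply/andP; split; rewrite ?Ah; lra.
- move=> i si; have := hA0 i; rewrite setDIK measure0 expr0 mulr1 Ah hAi //.
  by split => //=; lra.
- by move=> z [[]|/hA].
- by move: hAj; rewrite -ltNge => hAj; apply/andP; split; rewrite ?Ah; lra.
- move=> i si; have := hA0 i; rewrite AhA measure0 expr0 mulr1 Ah hAi //.
  by split => //=; lra.
Qed.

Lemma bisect_invS k XY : bisect_inv k XY -> bisect_inv k.+1 (bisect_step XY).
Proof.
case: XY => X Y [/= mX mY XYA /andP[Xj Yj] XYi].
have [mZ XYZ ZXY] := bisect_mid_sub mX mY.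
have halved i c : i \in s -> c * 2 <= fine (mu i X) - fine (mu i (X `&` Y)) ->
    c * 2 ^+ k.+1 <= fine (mu i A).
  move=> si c2; have [_ _ dk] := XYi i si; apply: le_trans dk.
  by rewrite exprS mulrA ler_pM2r ?exprn_gt0.
have eXY i : i \in s -> fine (mu i X) = fine (mu i Y).
  by move=> si; have [-> -> _] := XYi i si.
rewrite /bisect_step /=; case: ifPn => Zj; split => //=.
- by move=> z [Xz|/ZXY Zz]; apply: XYA; [left|].
- by rewrite Xj.
- move=> i si; have [eX _ _] := XYi i si.
  have [eZ dX _] := bisect_mid_measure si mX mY (eXY i si).
  by split => //; [rewrite eZ | exact: halved si dX].
- by move=> z [/ZXY Zz|Yz]; apply: XYA; [|right].
- by rewrite Yj andbT ltW // ltNge.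
- move=> i si; have [eX eY _] := XYi i si.
  have [eZ _ dY] := bisect_mid_measure si mX mY (eXY i si).
  by split => //; rewrite eZ //; exact: halved si dY.
Qed.

Lemma bisect_invP k : bisect_inv k (bisect k).
Proof.
by elim: k => [|k IH]; [exact: bisect_inv0 | rewrite bisectS; exact: bisect_invS].
Qed.

Definition bisect_inner := \bigcup_k ((bisect k).1 `&` (bisect k).2).

Definition bisect_outer := \bigcap_k ((bisect k).1 `|` (bisect k).2).

Lemma bisect_inner_nondecreasing :
  nondecreasing_seq (fun k => (bisect k).1 `&` (bisect k).2).
Proof.
apply/nondecreasing_seqP => k; apply/subsetPset; have [mX mY _ _ _] := bisect_invP k.
have [_ XYZ _] := bisect_mid_sub mX mY.
rewrite bisectS /bisect_step; case: ifP => _ z [Xz Yz] /=; split => //; exact: XYZ.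
Qed.

Lemma bisect_outer_nonincreasing :
  nonincreasing_seq (fun k => (bisect k).1 `|` (bisect k).2).
Proof.
apply/nonincreasing_seqP => k; apply/subsetPset; have [mX mY _ _ _] := bisect_invP k.
have [_ _ ZXY] := bisect_mid_sub mX mY.
rewrite bisectS /bisect_step; case: ifP => _ z /= [|] wz;
  by [left | right | exact: ZXY].
Qed.

Lemma measurable_bisect_inner : measurable bisect_inner.
Proof.
by apply: bigcupT_measurable => k; have [mX mY _ _ _] := bisect_invP k;
  exact: measurableI.
Qed.

Lemma measurable_bisect_outer : measurable bisect_outer.
Proof.
by apply: bigcapT_measurable => k; have [mX mY _ _ _] := bisect_invP k;
  exact: measurableU.
Qed.

Lemma bisect_inner_sub_outer : bisect_inner `<=` bisect_outer.
Proof.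
move=> z [k _ XYz] n _; have [kn|nk] := leqP k n.
  by have /subsetPset/(_ z XYz) [Xz _] := bisect_inner_nondecreasing kn; left.
have /subsetPset := bisect_outer_nonincreasing (ltnW nk); apply.
by case: XYz; left.
Qed.

Lemma bisect_outer_sub : bisect_outer `<=` A.
Proof.
by move=> z /(_ 0%N Logic.I); have [_ _ XYA _ _] := bisect_invP 0; exact: XYA.
Qed.

Lemma bisect_inner_le_half_le_outer :
  fine (mu j bisect_inner) <= half <= fine (mu j bisect_outer).
Proof.
apply/andP; split.
  apply: fine_measure_bigcup_le bisect_inner_nondecreasing _ => [k|k].
    by have [mX mY _ _ _] := bisect_invP k; exact: measurableI.
  have [mX mY _ /andP[Xj _] _] := bisect_invP k.
  apply: le_trans Xj; apply: le_fine_measure (measurableI _ _ mX mY) mX _.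
  exact: subIsetl.
apply: fine_measure_bigcap_ge bisect_outer_nonincreasing _ => [k|k].
  by have [mX mY _ _ _] := bisect_invP k; exact: measurableU.
have [mX mY _ /andP[_ Yj] _] := bisect_invP k.
apply: le_trans Yj _; apply: le_fine_measure mY (measurableU _ _ mX mY) _.
exact: subsetUr.
Qed.

Lemma bisect_squeeze i E : i \in s -> measurable E ->
  bisect_inner `<=` E -> E `<=` bisect_outer -> fine (mu i E) = fine (mu i A) / 2.
Proof.
move=> si mE IE EU; apply/eqP; rewrite eq_le; apply/andP; split.
  suff : fine (mu i E) - fine (mu i A) / 2 <= 0 by lra.
  apply: (pow2_bounded_le0 (y := fine (mu i A))) => k.
  have [mX mY _ _ /(_ i si) [eX eY dk]] := bisect_invP k.
  apply: le_trans dk; rewrite ler_pM2r ?exprn_gt0 //.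
  have : fine (mu i E) <= fine (mu i ((bisect k).1 `|` (bisect k).2)).
    by apply: le_fine_measure => //; [exact: measurableU | move=> z /EU; apply].
  rewrite fine_measureUI //; lra.
suff : fine (mu i A) / 2 - fine (mu i E) <= 0 by lra.
apply: (pow2_bounded_le0 (y := fine (mu i A))) => k.
have [mX mY _ _ /(_ i si) [eX eY dk]] := bisect_invP k.
apply: le_trans dk; rewrite ler_pM2r ?exprn_gt0 //.
have : fine (mu i ((bisect k).1 `&` (bisect k).2)) <= fine (mu i E).
  apply: le_fine_measure => //; first exact: measurableI.
  by move=> z XYz; apply: IE; exists k.
lra.
Qed.

Hypothesis mu_j_na : nonatomic (mu j).

Lemma exists_half_subset_cons : exists E, [/\ measurable E, E `<=` A &
  forall i, i \in j :: s -> fine (mu i E) = fine (mu i A) / 2].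
Proof.
have mI := measurable_bisect_inner; have mU := measurable_bisect_outer.
have IU := bisect_inner_sub_outer; have /andP[Ij Uj] := bisect_inner_le_half_le_outer.
have UI : fine (mu j (bisect_outer `\` bisect_inner)) =
    fine (mu j bisect_outer) - fine (mu j bisect_inner) by exact: fine_measureD.
have [|Z [mZ ZUI eZ]] := @nonatomic_subset_fine_measure_eq _ _ _ _ mu_j_na _
  (half - fine (mu j bisect_inner)) (measurableD mU mI).
  by apply/andP; split; lra.
have IZU : bisect_inner `|` Z `<=` bisect_outer by move=> z [/IU|/ZUI[]].
exists (bisect_inner `|` Z); split.
- exact: measurableU.
- exact: subset_trans IZU bisect_outer_sub.
- move=> i; rewrite inE => /orP[/eqP ->|si]; last first.
    exact: bisect_squeeze si (measurableU _ _ mI mZ) (@subsetUl _ _ _) IZU.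
  rewrite fine_measureU // ?eZ /half; first lra.
  by rewrite setIC; apply/disjoints_subset => z /ZUI[].
Qed.

End bisection.

Lemma exists_halving s : (forall i, i \in s -> nonatomic (mu i)) ->
  exists h, halving s h.
Proof.
elim: s => [_|j s IH s_na]; first by exists id => X mX; split.
have [h hs] := IH (fun i si => s_na i (mem_behead (s := j :: s) si)).
have half_sub X : exists E, measurable X -> [/\ measurable E, E `<=` X &
    forall i, i \in j :: s -> fine (mu i E) = fine (mu i X) / 2].
  have [mX|nX] := pselect (measurable X); last by exists set0 => /nX.
  have [E ?] := exists_half_subset_cons hs mX (s_na j (mem_head j s)).
  by exists E.
by have [h' hh'] := choice half_sub; exists h' => X /hh'.
Qed.

Section dyadic_fraction.
Variables (s : seq I) (h : set T -> set T) (A : set T) (t : R).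
Hypotheses (hs : halving s h) (mA : measurable A) (t01 : 0 <= t <= 1).

(* u is the fraction of Q that still has to be added to E; each step consumes
   one binary digit of u. *)
Definition dyadic_step (EQu : set T * set T * R) :=
  let: (E, Q, u) := EQu in
  if 1 / 2 <= u then (E `|` h Q, Q `\` h Q, 2 * u - 1) else (E, h Q, 2 * u).

Definition dyadic k := iter k dyadic_step (set0, A, t).

Definition dyadic_inv k (EQu : set T * set T * R) :=
  let: (E, Q, u) := EQu in
  [/\ measurable E, measurable Q, E `|` Q `<=` A, E `&` Q = set0 &
    0 <= u <= 1 /\
    forall i, i \in s -> fine (mu i E) + u * fine (mu i Q) = t * fine (mu i A) /\
                         fine (mu i Q) * 2 ^+ k = fine (mu i A)].

Lemma dyadic_invS k EQu : dyadic_inv k EQu -> dyadic_inv k.+1 (dyadic_step EQu).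
Proof.
case: EQu => [[E Q] u] [mE mQ EQA EQ0 [/andP[u0 u1] EQi]].
have [mhQ hQ hQi] := hs mQ.
rewrite /dyadic_step; case: ifPn => [u_ge|]; last rewrite -ltNge => u_lt; split => //.
- exact: measurableU.
- exact: measurableD.
- by move=> z [[Ez|/hQ Qz]|[Qz _]]; apply: EQA; [left|right|right].
- rewrite setIUl setDIK setU0.
  exact: subsetI_eq0 (@subset_refl _ E) (@subDsetl _ Q (h Q)) EQ0.
- split; first by apply/andP; split; lra.
  move=> i si; have [e1 e2] := EQi i si.
  rewrite fine_measureU ?fine_measureD // ?hQi //; last first.
    exact: subsetI_eq0 (@subset_refl _ E) hQ EQ0.
  by split; [rewrite -e1 | rewrite exprS mulrA -e2]; lra.
- by move=> z [Ez|/hQ Qz]; apply: EQA; [left|right].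
- exact: subsetI_eq0 (@subset_refl _ E) hQ EQ0.
- split; first by apply/andP; split; lra.
  move=> i si; have [e1 e2] := EQi i si.
  by rewrite hQi //; split; [rewrite -e1 | rewrite exprS mulrA -e2]; lra.
Qed.

Lemma dyadic_invP k : dyadic_inv k (dyadic k).
Proof.
elim: k => [|k IH]; last by rewrite /dyadic iterS; exact: dyadic_invS.
rewrite /dyadic_inv /=; split => //; first by move=> z [].
  by rewrite set0I.
split => // i si; rewrite measure0 expr0 mulr1; split => //=; lra.
Qed.

Lemma exists_fraction : exists E, [/\ measurable E, E `<=` A &
  forall i, i \in s -> fine (mu i E) = t * fine (mu i A)].
Proof.
pose E k := (dyadic k).1.1.
have invE k : [/\ measurable (E k), E k `<=` A &
    forall i, i \in s -> t * fine (mu i A) - fine (mu i A) / 2 ^+ k <= fine (mu i (E k))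
      <= t * fine (mu i A)].
  rewrite /E; case: (dyadic k) (dyadic_invP k) => [[F Q] u].
  move=> [mF mQ FQA _ [/andP[u0 u1] FQi]].
  split => //; first by move=> z Fz; apply: FQA; left.
  move=> i si; have [e1 e2] := FQi i si; have Q0 := fine_measure_ge0 (mu i) Q.
  rewrite -e2 mulfK ?expf_neq0 //; apply/andP; split; nra.
have mE k : measurable (E k) by case: (invE k).
have ndE : nondecreasing_seq E.
  apply/nondecreasing_seqP => k; apply/subsetPset.
  rewrite /E /dyadic iterS -/(dyadic k).
  by case: (dyadic k) => [[F Q] u] /=; case: ifP => _ z Fz //; left.
exists (\bigcup_k E k); split; first exact: bigcupT_measurable.
  by move=> z [k _]; case: (invE k) => _ + _; apply.
move=> i si; apply/eqP; rewrite eq_le; apply/andP; split.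
  by apply: fine_measure_bigcup_le => // k; have [_ _ /(_ i si) /andP[]] := invE k.
suff : t * fine (mu i A) - fine (mu i (\bigcup_k E k)) <= 0 by lra.
apply: (pow2_bounded_le0 (y := fine (mu i A))) => k.
have [_ _ /(_ i si) /andP[Ek _]] := invE k.
have EkU : fine (mu i (E k)) <= fine (mu i (\bigcup_k E k)).
  by apply: le_fine_measure (mE k) (bigcupT_measurable _ mE) _; exact: bigcup_sup.
rewrite -ler_pdivlMr ?exprn_gt0 //; lra.
Qed.

End dyadic_fraction.

Lemma exists_equipartition s h n A : halving s h -> measurable A ->
  exists F : nat -> set T, [/\ forall k, measurable (F k), trivIset `I_n.+1 F,
    \bigcup_(k < n.+1) F k = A &
    forall k i, (k < n.+1)%N -> i \in s ->
      fine (mu i (F k)) = fine (mu i A) / n.+1%:R].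
Proof.
move=> hs; elim: n A => [|n IH] A mA.
  exists (fun k => if k == 0%N then A else set0); split.
  - by case=> [|k] //=; exact: measurable0.
  - by move=> [|i] [|j].
  - by rewrite bigcup_mkord big_ord1.
  - by case=> // i _ _; rewrite divr1.
have n2_gt0 : 0 < n.+2%:R :> R by [].
have [|E [mE EA Ei]] := exists_fraction hs mA (t := 1 / n.+2%:R).
  by rewrite divr_ge0 //= ler_pdivrMr // mul1r ler1n.
have [F [mF tF cF vF]] := IH (A `\` E) (measurableD mA mE).
have FAE k : (k < n.+1)%N -> F k `<=` A `\` E.
  by move=> kn z Fz; rewrite -cF; exists k.
exists (fun k => if k is k.+1 then F k else E); split.
- by case.
- apply/trivIsetP => -[|i] [|j] //= i_lt j_lt ij.
  + by apply: subsetI_eq0 (@subset_refl _ E) (FAE j j_lt) _; rewrite setDIK.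
  + by apply: subsetI_eq0 (FAE i i_lt) (@subset_refl _ E) _; rewrite setDKI.
  + by move/trivIsetP : tF; apply.
- apply/seteqP; split => [z [[|k] /= kn Gz]|z Az]; first exact: EA.
    by have [] := FAE k kn z Gz.
  have [Ez|nEz] := pselect (E z); first by exists 0%N.
  have : (A `\` E) z by [].
  by rewrite -cF => -[k kn Fz]; exists k.+1.
- move=> [|k] i kn si; first by rewrite Ei // mulrC mul1r.
  rewrite vF // fine_measureD // Ei //.
  by field; have n0 : 0 <= n%:R :> R by []; apply/andP; split; apply/eqP; lra.
Qed.

End simultaneous_halving.

Local Open Scope ereal_scope.

Lemma eq_nonatomic d (T : measurableType d) (R : realType) (f g : set T -> \bar R) :
  (forall A, measurable A -> f A = g A) -> nonatomic f -> nonatomic g.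
Proof.
move=> fg fna A [mA gA gB]; apply: (@fna A); split => //; first by rewrite fg.
by move=> B mB BA; rewrite !fg //; exact: gB.
Qed.

Section jordan_decomposition_fine.
Context d (T : measurableType d) (R : realType).
Variables (nu : {charge set T -> \bar R}) (P N : set T).
Variable nuPN : hahn_decomposition nu P N.

Lemma charge_fine_jordan A : measurable A ->
  nu A = (fine (jordan_pos nuPN A) - fine (jordan_neg nuPN A))%R%:E.
Proof.
move=> mA; rewrite (jordan_decomp nuPN mA) /cadd /= cscaleN1 EFinB.
by rewrite !fineK ?fin_num_measure.
Qed.

Lemma nonatomic_jordan_pos :
  nonatomic (fun E => nu (E `&` P)) -> nonatomic (jordan_pos nuPN).
Proof.
by apply: eq_nonatomic => E mE; rewrite jordan_posE cjordan_posE /crestr0 mem_set.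
Qed.

Lemma nonatomic_jordan_neg :
  nonatomic (fun E => - nu (E `&` N)) -> nonatomic (jordan_neg nuPN).
Proof.
by apply: eq_nonatomic => E mE; rewrite jordan_negE cjordan_negE /crestr0 mem_set.
Qed.

End jordan_decomposition_fine.

Section charge_equipartition.
Context d (T : measurableType d) (R : realType).

Lemma exists_charge_equipartition (I : finType) (psi : I -> {charge set T -> \bar R})
    (psi_na : forall i, charge_nonatomic (psi i)) n :
  exists F : nat -> set T, [/\ forall k, measurable (F k), trivIset `I_n.+1 F,
    \bigcup_(k < n.+1) F k = [set: T] &
    forall i k, (k < n.+1)%N -> psi i (F k) = (fine (psi i setT) / n.+1%:R)%:E].
Proof.
have hahn i : exists PN : set T * set T,
    [/\ hahn_decomposition (psi i) PN.1 PN.2,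
        nonatomic (fun E => psi i (E `&` PN.1)) &
        nonatomic (fun E => - psi i (E `&` PN.2))].
  by have [P [N ?]] := psi_na i; exists (P, N).
have [PN PNP] := choice hahn.
have psiPN i : hahn_decomposition (psi i) (PN i).1 (PN i).2 by case: (PNP i).
pose mu (k : I + I) : {finite_measure set T -> \bar R} :=
  match k with inl i => jordan_pos (psiPN i) | inr i => jordan_neg (psiPN i) end.
have mu_na k : k \in enum {: I + I} -> nonatomic (mu k).
  case: k => i _ /=; have [_ ? ?] := PNP i;
    [exact: nonatomic_jordan_pos | exact: nonatomic_jordan_neg].
have [h hs] := exists_halving mu_na.
have [F [mF tF cF eqF]] := exists_equipartition n hs measurableT.
exists F; split => // i k kn.
have /= pos := eqF k (inl i) kn (mem_enum _ _).
have /= neg := eqF k (inr i) kn (mem_enum _ _).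
by rewrite !(charge_fine_jordan (psiPN i)) // pos neg mulrBl.
Qed.

End charge_equipartition.

Theorem theorem1 (d : measure_display) (T : measurableType d) (R : realType)
  (r : nat) (hr : (0 < r)%N)
  (psi : 'I_r -> {charge set T -> \bar R})
  (hna : forall i, charge_nonatomic (psi i)) :
  exists F : 'I_r -> set T,
    [/\ forall i, measurable (F i),
        forall i j, i != j -> F i `&` F j = set0,
        \bigcup_i F i = [set: T] &
        forall i j, psi i (F j) <= psi i (F i)].
Proof.
have [F [mF tF cF eqF]] := exists_charge_equipartition hna r.-1.
rewrite prednK // in tF cF eqF.
exists (fun i : 'I_r => F i); split => //.
- by move=> i j ij; move/trivIsetP : tF; apply; rewrite /= ?ltn_ord.
- apply/seteqP; split => // z _; have : (\bigcup_(k < r) F k) z by rewrite cF.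
  by case=> k /= kr Fz; exists (Ordinal kr).
- by move=> i j; rewrite !eqF.
Qed.
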